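(* Let $\mathfrak A$ be a properly infinite von Neumann algebra acting on a Hilbert space $\mathcal H$. Then $\mathfrak A$ is neither $*$-clean nor strongly clean.
   Context: A $*$-ring is $*$-clean if every element is the sum of an invertible element and a projection ($P=P^*=P^2$). A unital ring is strongly clean if every element $T$ can be written as $U+P$ with $U$ invertible, $P$ idempotent and $PT=TP$. *)

From HB Require Import structures.
From mathcomp Require Import all_boot all_order all_algebra.
From mathcomp Require Import complex.
From mathcomp Require Import reals.
Set Implicit Arguments. Unset Strict Implicit. Unset Printing Implicit Defensive.
Import Order.TTheory GRing.Theory Num.Theory.
Local Open Scope ring_scope.

Section Hilbert.
Variables (R : realType) (H : lmodType R[i]) (ip : H -> H -> R[i]).

Definition hnorm (x : H) : R := Num.sqrt (complex.Re (ip x x)).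

Definition is_hilbert : Prop :=
  [/\ (forall (a : R[i]) x y z, ip (a *: x + y) z = a * ip x z + ip y z),
      (forall x y, ip y x = (ip x y)^*),
      (forall x, 0 <= ip x x),
      (forall x, ip x x = 0 -> x = 0) &
      (forall u : nat -> H,
         (forall e : R, 0 < e -> exists N, forall m n, (N <= m)%N -> (N <= n)%N ->
             hnorm (u m - u n) < e) ->
         exists l : H, forall e : R, 0 < e -> exists N, forall n, (N <= n)%N ->
             hnorm (u n - l) < e)].

Definition bounded_op (T : H -> H) : Prop :=
  (forall (a : R[i]) x y, T (a *: x + y) = a *: T x + T y) /\
  exists M : R, forall x, hnorm (T x) <= M * hnorm x.

Definition is_adjoint (T S : H -> H) : Prop := forall x y, ip (T x) y = ip x (S y).

Definition op_eq (T S : H -> H) : Prop := forall x, T x = S x.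
Definition commute_op (T S : H -> H) : Prop := op_eq (T \o S) (S \o T).

Definition commutant (A : (H -> H) -> Prop) (S : H -> H) : Prop :=
  bounded_op S /\ forall T, A T -> commute_op S T.

Definition von_neumann_algebra (A : (H -> H) -> Prop) : Prop :=
  [/\ forall T, A T -> bounded_op T,
      forall T, A T -> exists S, A S /\ is_adjoint T S &
      forall T, A T <-> commutant (commutant A) T].

Definition is_projection (P : H -> H) : Prop := op_eq (P \o P) P /\ is_adjoint P P.

Definition mvn_equiv (A : (H -> H) -> Prop) (P Q : H -> H) : Prop :=
  exists V Vs, [/\ A V, A Vs, is_adjoint V Vs, op_eq (Vs \o V) P & op_eq (V \o Vs) Q].

Definition proj_le (Q P : H -> H) : Prop := op_eq (Q \o P) Q.
Definition proj_lt (Q P : H -> H) : Prop := proj_le Q P /\ ~ op_eq Q P.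

Definition infinite_proj (A : (H -> H) -> Prop) (P : H -> H) : Prop :=
  A P /\ is_projection P /\
  exists Q, [/\ A Q, is_projection Q, proj_lt Q P & mvn_equiv A P Q].

Definition central_proj (A : (H -> H) -> Prop) (P : H -> H) : Prop :=
  A P /\ is_projection P /\ forall T, A T -> commute_op P T.

(* properly infinite (Kadison-Ringrose 6.3.1): I is infinite and every
   central projection is 0 or infinite *)
Definition properly_infinite (A : (H -> H) -> Prop) : Prop :=
  infinite_proj A id /\
  forall Q, central_proj A Q -> op_eq Q (fun _ => 0) \/ infinite_proj A Q.

Definition invertible_in (A : (H -> H) -> Prop) (U : H -> H) : Prop :=
  exists V, [/\ A V, op_eq (U \o V) id & op_eq (V \o U) id].

Definition star_clean (A : (H -> H) -> Prop) : Prop :=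
  forall T, A T -> exists U P, [/\ A U, A P, invertible_in A U, is_projection P &
                                  op_eq T (fun x => U x + P x)].

Definition strongly_clean (A : (H -> H) -> Prop) : Prop :=
  forall T, A T -> exists U P, [/\ A U, A P, invertible_in A U,
                                  op_eq (P \o P) P /\ commute_op P T &
                                  op_eq T (fun x => U x + P x)].
End Hilbert.

(* Proper infiniteness yields an isometry [V] in [A] whose range projection
   [Q = V V^*] is not [1], so [V] is not surjective; the element [3 V] witnesses
   both failures.  If [3 V = U + P] with [U] invertible and [P] a projection,
   then [U = (3 - P V^* ) V] and [3 - P V^*] is injective since [|P V^*| <= 1],
   so the surjectivity of [U] forces that of [V].  If instead [P] is an
   idempotent commuting with [3 V], then [P] commutes with [U] and [V]; on the
   range of [1 - P], [3 V] agrees with [U], and on the range of [P] we have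
   [3 V = U + 1 = U (1 + U^-1)] with [|U^-1| <= 1/2] there, so [1 + U^-1] is
   inverted by a Neumann series and again [3 V] is surjective. *)

From HB Require Import structures.
From mathcomp Require Import all_boot all_order all_algebra.
From mathcomp Require Import complex.
From mathcomp Require Import reals.
From mathcomp Require Import ring lra.
Set Implicit Arguments. Unset Strict Implicit. Unset Printing Implicit Defensive.
Import Order.TTheory GRing.Theory Num.Theory.
Local Open Scope ring_scope.

Lemma geometric_vanishing (R : archiRealFieldType) (q c e : R) :
  0 <= q -> q < 1 -> 0 < e -> exists N, forall n, (N <= n)%N -> q ^+ n * c < e.
Proof.
move=> q_ge0 q_lt1 e_gt0; have [->|q_neq0] := eqVneq q 0.
  by exists 1%N => -[|n] // _; rewrite expr0n mul0r.
have q_gt0 : 0 < q by rewrite lt_def q_neq0.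
pose d := q^-1 - 1.
have d_gt0 : 0 < d by rewrite subr_gt0 invf_gt1.
have bernoulli n : 1 + n%:R * d <= q^-1 ^+ n.
  elim: n => [|n IH]; first by rewrite mul0r addr0 expr0.
  have qV : q^-1 = 1 + d by rewrite /d addrC subrK.
  rewrite exprS {1}qV -natr1.
  set X := q^-1 ^+ n in IH *.
  have : 0 <= n%:R * d * d by rewrite !mulr_ge0 ?ler0n ?ltW.
  nra.
have c_ge0 : 0 <= `|c| / (d * e) by rewrite divr_ge0 // mulr_ge0 // ltW.
exists (Num.Def.archi_bound (`|c| / (d * e))) => n le_Nn.
have c_lt : `|c| < e * q^-1 ^+ n.
  have : `|c| / (d * e) < n%:R.
    by apply: lt_le_trans (archi_boundP c_ge0) _; rewrite ler_nat.
  rewrite ltr_pdivrMr ?mulr_gt0 // => lt_c.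
  apply: lt_le_trans lt_c _; rewrite mulrA mulrC ler_pM2l //.
  by apply: le_trans (bernoulli n); rewrite lerDr.
have qn_gt0 : 0 < q ^+ n by rewrite exprn_gt0.
have -> : e = q ^+ n * (e * q^-1 ^+ n).
  by rewrite exprVn mulrCA mulfV ?mulr1 // gt_eqF.
apply: le_lt_trans (_ : _ <= q ^+ n * `|c|) _; last by rewrite ltr_pM2l.
by rewrite ler_pM2l // real_ler_norm ?num_real.
Qed.

Section Hilbert.
Variables (R : realType) (H : lmodType R[i]) (ip : H -> H -> R[i]).
Hypothesis hilbH : is_hilbert ip.

Lemma ipZlD a x y z : ip (a *: x + y) z = a * ip x z + ip y z.
Proof. by case: hilbH => + _ _ _ _; apply. Qed.

Lemma ipDl x y z : ip (x + y) z = ip x z + ip y z.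
Proof. by rewrite -[x]scale1r ipZlD mul1r scale1r. Qed.

Lemma ip0l z : ip 0 z = 0.
Proof. by apply: (addrI (ip 0 z)); rewrite -ipDl !addr0. Qed.

Lemma ipZl a x z : ip (a *: x) z = a * ip x z.
Proof. by rewrite -[a *: x]addr0 ipZlD ip0l addr0. Qed.

Lemma ipC x y : ip y x = (ip x y)^*.
Proof. by case: hilbH => _ + _ _ _; apply. Qed.

Definition ipr x y := complex.Re (ip x y).

Lemma iprC x y : ipr x y = ipr y x.
Proof. by rewrite /ipr (ipC x y); case: (ip x y). Qed.

Lemma iprDl x y z : ipr (x + y) z = ipr x z + ipr y z.
Proof. by rewrite /ipr ipDl; case: (ip x z); case: (ip y z). Qed.

Lemma iprZl (r : R) x z : ipr (r%:C%C *: x) z = r * ipr x z.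
Proof. by rewrite /ipr ipZl; case: (ip x z) => a b /=; rewrite mul0r subr0. Qed.

Lemma iprNl x z : ipr (- x) z = - ipr x z.
Proof.
rewrite /ipr -scaleN1r ipZl; case: (ip x z) => a b /=.
by rewrite oppr0 mul0r subr0 mulN1r.
Qed.

Lemma iprDr x y z : ipr z (x + y) = ipr z x + ipr z y.
Proof. by rewrite !(iprC z) iprDl. Qed.

Lemma iprZr (r : R) x z : ipr z (r%:C%C *: x) = r * ipr z x.
Proof. by rewrite !(iprC z) iprZl. Qed.

Lemma iprNr x z : ipr z (- x) = - ipr z x.
Proof. by rewrite !(iprC z) iprNl. Qed.

Lemma ipr0r z : ipr z 0 = 0.
Proof. by rewrite iprC /ipr ip0l. Qed.

Lemma ipr_ge0 x : 0 <= ipr x x.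
Proof. by case: hilbH => _ _ /(_ x) + _ _; rewrite lecE => /andP[]. Qed.

Lemma ipr_eq0 x : ipr x x = 0 -> x = 0.
Proof.
case: hilbH => _ _ ge0 eq0 _ a0; apply: eq0.
by move: (ge0 x) a0; rewrite lecE /ipr; case: (ip x x) => a b /= /andP[/eqP -> _] ->.
Qed.

Lemma iprDD x y : ipr (x + y) (x + y) = ipr x x + 2 * ipr x y + ipr y y.
Proof. by rewrite iprDl !iprDr (iprC y x); ring. Qed.

Lemma hnorm_ge0 x : 0 <= hnorm ip x.
Proof. exact: sqrtr_ge0. Qed.

Lemma hnorm_sq x : hnorm ip x ^+ 2 = ipr x x.
Proof. exact/sqr_sqrtr/ipr_ge0. Qed.

Lemma hnorm_eq0 x : hnorm ip x = 0 -> x = 0.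
Proof. by move=> x0; apply: ipr_eq0; rewrite -hnorm_sq x0 expr0n. Qed.

Lemma hnorm0 : hnorm ip 0 = 0.
Proof. by rewrite /hnorm ip0l sqrtr0. Qed.

Lemma hnorm_le x y : ipr x x <= ipr y y -> hnorm ip x <= hnorm ip y.
Proof. exact: ler_wsqrtr. Qed.

Lemma hnormZ (r : R) x : hnorm ip (r%:C%C *: x) = `|r| * hnorm ip x.
Proof.
rewrite /hnorm -/(ipr _ _) iprZl iprZr mulrA -expr2.
by rewrite sqrtrM ?sqr_ge0 // sqrtr_sqr.
Qed.

Lemma hnormMn n x : hnorm ip (n%:R *: x) = n%:R * hnorm ip x.
Proof. by rewrite -(rmorph_nat (@complex.real_complex R)) hnormZ normr_nat. Qed.

Lemma hnormN x : hnorm ip (- x) = hnorm ip x.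
Proof. by rewrite /hnorm -!/(ipr _ _) iprNl iprNr opprK. Qed.

Lemma hnormB x y : hnorm ip (x - y) = hnorm ip (y - x).
Proof. by rewrite -hnormN opprB. Qed.

(* Cauchy-Schwarz, from [0 <= ipr w w] for [w = |y| x - |x| y]. *)
Lemma ipr_le_hnormM x y : ipr x y <= hnorm ip x * hnorm ip y.
Proof.
have [y0|y_neq0] := eqVneq (hnorm ip y) 0.
  by rewrite y0 mulr0 (hnorm_eq0 y0) ipr0r.
have [x0|x_neq0] := eqVneq (hnorm ip x) 0.
  by rewrite x0 mul0r (hnorm_eq0 x0) iprC ipr0r.
have xy_gt0 : 0 < hnorm ip x * hnorm ip y.
  by rewrite mulr_gt0 // lt_def ?x_neq0 ?y_neq0 hnorm_ge0.
have := ipr_ge0 ((hnorm ip y)%:C%C *: x + (- hnorm ip x)%:C%C *: y).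
rewrite iprDD !iprZl !iprZr -!hnorm_sq => h.
by rewrite -(ler_pM2l xy_gt0); nra.
Qed.

Lemma hnormD x y : hnorm ip (x + y) <= hnorm ip x + hnorm ip y.
Proof.
rewrite -(ler_pXn2r (_ : 0 < 2)%N) ?nnegrE ?addr_ge0 ?hnorm_ge0 //.
rewrite hnorm_sq iprDD -!hnorm_sq.
have := ipr_le_hnormM x y; nra.
Qed.

Definition linear_op (T : H -> H) :=
  forall (a : R[i]) x y, T (a *: x + y) = a *: T x + T y.

Section LinearOp.
Variable T : H -> H.
Hypothesis linT : linear_op T.

Lemma linopD x y : T (x + y) = T x + T y.
Proof. by rewrite -[x]scale1r linT !scale1r. Qed.

Lemma linop0 : T 0 = 0.
Proof. by apply: (addrI (T 0)); rewrite -linopD !addr0. Qed.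

Lemma linopZ a x : T (a *: x) = a *: T x.
Proof. by rewrite -[a *: x]addr0 linT linop0 addr0. Qed.

Lemma linopN x : T (- x) = - T x.
Proof. by rewrite -scaleN1r linopZ scaleN1r. Qed.

Lemma linopB x y : T (x - y) = T x - T y.
Proof. by rewrite linopD linopN. Qed.

End LinearOp.

Lemma bounded_op_ge0 T : bounded_op ip T ->
  exists2 K, 0 <= K & forall x, hnorm ip (T x) <= K * hnorm ip x.
Proof.
case=> _ [M leM]; exists `|M| => // x; apply: le_trans (leM x) _.
by rewrite ler_wpM2r ?hnorm_ge0 // real_ler_norm ?num_real.
Qed.

Lemma ipr_proj P v : is_projection ip P -> ipr (P v) v = ipr (P v) (P v).
Proof. by case=> /(_ v) /= PPv adjP; rewrite iprC [RHS]/ipr adjP PPv. Qed.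

Lemma hnorm_proj_le P : is_projection ip P -> forall v, hnorm ip (P v) <= hnorm ip v.
Proof.
move=> projP v; apply: hnorm_le.
have orth : ipr (v - P v) (P v) = 0 by rewrite iprDl iprNl iprC ipr_proj // subrr.
by rewrite -[in leRHS](subrK (P v) v) iprDD orth mulr0 addr0 lerDr ipr_ge0.
Qed.

Lemma hnorm_isometry V Vs : is_adjoint ip V Vs -> cancel V Vs ->
  forall w, hnorm ip (V w) = hnorm ip w.
Proof. by move=> adjV VsV w; rewrite /hnorm adjV VsV. Qed.

Lemma hnorm_coisometry_le V Vs Q : is_adjoint ip V Vs -> op_eq (V \o Vs) Q ->
  is_projection ip Q -> forall v, hnorm ip (Vs v) <= hnorm ip v.
Proof.
move=> adjV VVs projQ v; apply: le_trans (hnorm_proj_le projQ v); apply: hnorm_le.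
by rewrite /ipr -adjV (VVs v : V (Vs v) = Q v) -/(ipr _ _) ipr_proj.
Qed.

Section NeumannSeries.
Variables (f : H -> H) (S : H -> Prop) (K q : R) (y : H).
(* [f] is a [q]-contraction only on [S]; the global bound [K] makes [f]
   continuous at the limit of the series, which need not lie in [S]. *)
Hypotheses (fD : {morph f : u v / u + v}) (K_ge0 : 0 <= K)
  (fK : forall x, hnorm ip (f x) <= K * hnorm ip x)
  (fS : forall x, S x -> S (f x)) (q_ge0 : 0 <= q) (q_lt1 : q < 1)
  (fq : forall x, S x -> hnorm ip (f x) <= q * hnorm ip x) (Sy : S y).

Let fB u v : f (u - v) = f u - f v.
Proof. by apply: (addIr (f v)); rewrite -fD !subrK. Qed.

Let f0 : f 0 = 0.
Proof. by have := fB 0 0; rewrite !subrr. Qed.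

Let iterate k := iter k f y.
Let partial n := \sum_(k < n) iterate k.

Let hnorm_iterate k : hnorm ip (iterate k) <= q ^+ k * hnorm ip y.
Proof.
have S_iterate j : S (iterate j) by elim: j => //= j; apply: fS.
elim: k => [|k IH]; first by rewrite expr0 mul1r.
rewrite exprS -mulrA; apply: le_trans (fq (S_iterate k)) _.
by rewrite ler_wpM2l.
Qed.

Let partial_fix n : partial n - f (partial n) = y - iterate n.
Proof.
elim: n => [|n IH]; first by rewrite /partial big_ord0 f0 !subrr.
by rewrite /partial big_ord_recr -/(partial n) fD opprD addrACA IH addrA subrK.
Qed.

Let c := hnorm ip y / (1 - q).

Let hnorm_partialB n m :
  hnorm ip (partial (n + m) - partial n) <= (q ^+ n - q ^+ (n + m)) * c.
Proof.
elim: m => [|m IH]; first by rewrite addn0 !subrr mul0r hnorm0.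
rewrite addnS /partial big_ord_recr -/(partial (n + m)) addrAC.
apply: le_trans (hnormD _ _) _; apply: le_trans (lerD IH (hnorm_iterate _)) _.
rewrite le_eqVlt; apply/orP; left; apply/eqP; rewrite /c exprS.
by field; rewrite subr_eq0 gt_eqF.
Qed.

Let partial_cauchy e : 0 < e -> exists N, forall m n, (N <= m)%N -> (N <= n)%N ->
  hnorm ip (partial m - partial n) < e.
Proof.
move=> e_gt0; have [N vanish] := geometric_vanishing c q_ge0 q_lt1 e_gt0.
exists N => m n; wlog le_nm : m n / (n <= m)%N => [W Nm Nn|_ Nn].
  by case: (leqP n m) => [|/ltnW] ?; [|rewrite hnormB]; apply: W.
rewrite -(subnKC le_nm); apply: le_lt_trans (hnorm_partialB _ _) _.
apply: le_lt_trans (vanish n Nn); rewrite ler_wpM2r ?gerDl ?oppr_le0 ?exprn_ge0 //.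
by rewrite divr_ge0 ?hnorm_ge0 // subr_ge0 ltW.
Qed.

Lemma neumann_series : exists z, z - f z = y.
Proof.
have [_ _ _ _ /(_ partial partial_cauchy) [l cvg_l]] := hilbH.
exists l; set D := l - f l - y.
have D_le n : hnorm ip D <= (1 + K) * hnorm ip (partial n - l) + q ^+ n * hnorm ip y.
  have -> : D = (l - partial n) - f (l - partial n) - iterate n.
    rewrite fB /D -[y](subrK (iterate n)) -partial_fix opprD addrA; congr (_ - _).
    by rewrite !opprB addrACA [RHS]addrACA [- partial n + _]addrC.
  apply: le_trans (hnormD _ _) _; rewrite hnormN (hnormB (partial n)) mulrDl mul1r.
  apply: lerD (hnorm_iterate n); apply: le_trans (hnormD _ _) _.
  by rewrite hnormN lerD2l.
apply/eqP; rewrite -subr_eq0 -/D; apply/eqP/hnorm_eq0/eqP.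
rewrite eq_le hnorm_ge0 andbT; apply/ler_addgt0Pr => e e_gt0; rewrite add0r.
have K1_gt0 : 0 < 1 + K by rewrite ltr_wpDr.
have e2_gt0 : 0 < e / 2 by rewrite divr_gt0.
have [N1 close] := cvg_l (e / 2 / (1 + K)) (divr_gt0 e2_gt0 K1_gt0).
have [N2 small] := geometric_vanishing (hnorm ip y) q_ge0 q_lt1 e2_gt0.
apply: le_trans (D_le (maxn N1 N2)) _.
have := small _ (leq_maxr N1 N2); have := close _ (leq_maxl N1 N2).
rewrite ltr_pdivlMr // hnormB; lra.
Qed.
End NeumannSeries.

Lemma clean_decomposition_surjective V Vs U U' P :
  linear_op Vs -> linear_op P -> cancel V Vs ->
  (forall v, hnorm ip (Vs v) <= hnorm ip v) ->
  (forall v, hnorm ip (P v) <= hnorm ip v) -> cancel U' U ->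
  (forall x, 3 *: V x = U x + P x) -> forall y, exists x, V x = y.
Proof.
move=> linVs linP VsV Vs_le P_le U'K decomp.
pose W w := 3 *: w - P (Vs w).
have UE x : U x = W (V x) by rewrite /W VsV decomp addrK.
have WB u v : W (u - v) = W u - W v.
  by rewrite /W (linopB linVs) (linopB linP) scalerBr !opprD !opprK addrACA.
have W_inj : injective W.
  move=> a b /eqP; rewrite -subr_eq0 -WB subr_eq0 => /eqP eq3.
  apply/eqP; rewrite -subr_eq0; apply/eqP/hnorm_eq0.
  have := le_trans (P_le _) (Vs_le (a - b)); rewrite -eq3 hnormMn.
  by have := hnorm_ge0 (a - b); lra.
by move=> y; exists (U' (W y)); apply: W_inj; rewrite -UE U'K.
Qed.

Section StronglyCleanDecomposition.
Variables V U U' P : H -> H.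
Hypotheses (linV : linear_op V) (isoV : forall w, hnorm ip (V w) = hnorm ip w)
  (bndP : bounded_op ip P) (bndU' : bounded_op ip U') (PP : forall x, P (P x) = P x)
  (P3V : forall x, P (3 *: V x) = 3 *: V (P x)) (UK : cancel U U') (U'K : cancel U' U)
  (decomp : forall x, 3 *: V x = U x + P x).

Let linP : linear_op P := bndP.1.
Let linU' : linear_op U' := bndU'.1.

Let UE x : U x = 3 *: V x - P x.
Proof. by rewrite decomp addrK. Qed.

Let PV x : P (V x) = V (P x).
Proof. by apply: (@scalerI _ _ 3); rewrite ?pnatr_eq0 // -(linopZ linP). Qed.

Let U'P x : U' (P x) = P (U' x).
Proof.
have UP w : U (P w) = P (U w) by rewrite !UE (linopB linP) (linopZ linP) PV PP.
by rewrite -{1}(U'K x) -UP UK.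
Qed.

(* On the range of [P] we have [3 V = U + 1], so [3 |w| <= |U w| + |w|]. *)
Lemma inverse_contraction_on_range x :
  P x = x -> hnorm ip (P (U' x)) <= 2^-1 * hnorm ip x.
Proof.
move=> Px; set w := P (U' x).
have Uw : U w = x by rewrite /w -U'P U'K.
have Pw : P w = w by rewrite /w PP.
have := hnormD x w; rewrite -{1}Uw -{2}Pw -decomp hnormMn isoV.
by have := hnorm_ge0 w; lra.
Qed.

Lemma strongly_clean_decomposition_surjective y : exists x, V x = y.
Proof.
have [Kp Kp_ge0 Kp_bnd] := bounded_op_ge0 bndP.
have [Ku Ku_ge0 Ku_bnd] := bounded_op_ge0 bndU'.
pose f w := - P (U' w).
have fD : {morph f : u v / u + v}.
  by move=> u v; rewrite /f (linopD linU') (linopD linP) opprD.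
have fK x : hnorm ip (f x) <= Kp * Ku * hnorm ip x.
  by rewrite hnormN -mulrA; apply: le_trans (Kp_bnd _) _; rewrite ler_wpM2l.
have fS x : P x = x -> P (f x) = f x by move=> _; rewrite /f (linopN linP) PP.
have fq x : P x = x -> hnorm ip (f x) <= 2^-1 * hnorm ip x.
  by rewrite hnormN; apply: inverse_contraction_on_range.
have half_ge0 : 0 <= 2^-1 :> R by rewrite invr_ge0.
have half_lt1 : 2^-1 < 1 :> R by rewrite invf_lt1 ?ltr1n.
have [z] := neumann_series fD (mulr_ge0 Kp_ge0 Ku_ge0) fK fS half_ge0 half_lt1 fq (PP y).
rewrite /f opprK => zE.
have U'_kernel : P (U' (y - P y)) = 0 by rewrite -U'P (linopB linP) PP subrr linop0.
exists (3 *: U' (y - P y + z)).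
rewrite (linopZ linV) decomp U'K (linopD linU') (linopD linP) U'_kernel add0r.
by rewrite -addrA zE subrK.
Qed.
End StronglyCleanDecomposition.

Section VonNeumannAlgebra.
Variable A : (H -> H) -> Prop.
Hypothesis vnA : von_neumann_algebra ip A.

Lemma vN_bounded T : A T -> bounded_op ip T.
Proof. by case: vnA => + _ _; apply. Qed.

Lemma vN_scale_nat n T : A T -> A (fun x => n%:R *: T x).
Proof.
move=> AT; case: vnA => bndA _ ->; split.
  have [linT [K bndT]] := bndA _ AT.
  split=> [a x y|]; first by rewrite linT scalerDr !scalerA mulrC.
  by exists (n%:R * K) => x; rewrite hnormMn -mulrA ler_wpM2l.
by move=> S [[linS _] commS] x /=; rewrite (linopZ linS); have /= -> := commS _ AT x.
Qed.
End VonNeumannAlgebra.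
End Hilbert.

Theorem lemma2p1 (R : realType) (H : lmodType R[i]) (ip : H -> H -> R[i])
  (A : (H -> H) -> Prop) :
  is_hilbert ip -> von_neumann_algebra ip A -> properly_infinite ip A ->
  ~ star_clean ip A /\ ~ strongly_clean A.
Proof.
move=> hilbH vnA [[_ [_ [Q [_ projQ [_ Q_neq1] [V [Vs [AV AVs adjV VsV VVs]]]]]]] _].
have VsK : cancel V Vs := VsV.
have V_not_onto : ~ forall y, exists x, V x = y.
  by move=> V_onto; apply: Q_neq1 => y; have [x <-] := V_onto y; rewrite -VVs /= VsK.
have linA T : A T -> linear_op T := fun AT => (vN_bounded vnA AT).1.
have A3V := vN_scale_nat hilbH vnA 3 AV.
split=> clean; apply: V_not_onto.
- have [U [P [_ AP [U' [_ U'K _]] projP decomp]]] := clean _ A3V.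
  apply: (clean_decomposition_surjective hilbH (linA _ AVs) (linA _ AP) VsK
           (hnorm_coisometry_le hilbH adjV VVs projQ) (hnorm_proj_le hilbH projP)
           (U'K : cancel U' U) decomp).
- have [U [P [_ AP [U' [AU' U'K UK]] [PP P3V] decomp]]] := clean _ A3V.
  apply: (strongly_clean_decomposition_surjective hilbH (linA _ AV)
           (hnorm_isometry adjV VsK) (vN_bounded vnA AP) (vN_bounded vnA AU') PP P3V
           (UK : cancel U U') (U'K : cancel U' U) decomp).
Qed.
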